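(* Let $k>0$ and fix $\Delta\in\mathbb{N}$. For every integer $n$ with $-\Delta<n<0$ there exists $\gamma_c=\gamma_c(k)\in\mathbb{R}$ such that $\Omega_{n,\gamma_c}=\Omega_{n+\Delta,\gamma_c}$ (the eigenvalues $i\Omega_{n,\gamma}$ and $i\Omega_{n+\Delta,\gamma}$ of $\mathcal H_0(\gamma)$ collide). All such collisions take place away from the origin (i.e. the common value is nonzero), except when $\Delta$ is even and $n=-\Delta/2$, in which case $n+\Delta=-n$ and the eigenvalues $i\Omega_{n,\gamma}$ and $i\Omega_{-n,\gamma}$ collide at the origin.
   Context: For $k>0$, $\gamma\in\mathbb{R}$ and $n\in\mathbb{Z}\setminus\{0\}$, set $\Omega_{n,\gamma}=k^3n(1-n^2)+\frac{3\gamma^2}{kn}$. These are such that $\mathcal H_0(\gamma)e^{inz}=i\Omega_{n,\gamma}e^{inz}$, where $\mathcal H_0(\gamma)=k^3\partial_z+k^3\partial_z^3-\frac{3\gamma^2}{k}\partial_z^{-1}$ on mean-zero $2\pi$-periodic functions (the zero-amplitude case of the linearized Konopelchenko–Dubrovsky operator), so its spectrum is $\{i\Omega_{n,\gamma}:n\in\mathbb{Z}\setminus\{0\}\}$. Two eigenvalues ''collide'' at $\gamma_c$ if $\Omega_{n,\gamma_c}=\Omega_{m,\gamma_c}$ for $n\ne m$. *)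

From Stdlib Require Export Reals ZArith Arith.
Open Scope R_scope.

Definition Omega (k : R) (n : Z) (g : R) : R :=
  k ^ 3 * IZR n * (1 - IZR n ^ 2) + 3 * g ^ 2 / (k * IZR n).

From Stdlib Require Import Reals ZArith Arith Lra Lia Psatz.
Open Scope R_scope.

(* For n <> m, Omega_n - Omega_m factors as (n - m) times an expression that is
   affine in gamma^2, so the two eigenvalues collide exactly when gamma^2 equals
   the level k^4 n m (1 - n^2 - n m - m^2) / 3, which is nonnegative when n < 0 < m.
   At that level the common value is k^3 (n + m) (1 - n^2 - m^2); since the second
   factor never vanishes for nonzero integers, the collision is at the origin
   exactly when m = -n, i.e. when Delta is even and n = -Delta/2. *)

Definition collision_level (k : R) (a b : Z) : R :=
  k ^ 4 * IZR a * IZR b * (1 - IZR a ^ 2 - IZR a * IZR b - IZR b ^ 2) / 3.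

Lemma Omega_sub (k g : R) (a b : Z) :
  k <> 0 -> IZR a <> 0 -> IZR b <> 0 ->
  Omega k a g - Omega k b g =
  (IZR a - IZR b) * (k ^ 4 * IZR a * IZR b
                       * (1 - IZR a ^ 2 - IZR a * IZR b - IZR b ^ 2) - 3 * g ^ 2)
  / (k * IZR a * IZR b).
Proof. intros. unfold Omega. field. auto. Qed.

Lemma Omega_eq_iff (k g : R) (a b : Z) :
  k <> 0 -> a <> 0%Z -> b <> 0%Z -> a <> b ->
  Omega k a g = Omega k b g <-> g ^ 2 = collision_level k a b.
Proof.
  intros hk ha hb hab.
  apply not_0_IZR in ha, hb.
  assert (hab' : IZR a - IZR b <> 0) by (intros E; apply hab, eq_IZR; lra).
  unfold collision_level; split; intros E.
  - apply Rminus_diag_eq in E; rewrite Omega_sub in E by assumption.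
    apply Rmult_integral in E as [E | E].
    + apply Rmult_integral in E as [E | E]; [contradiction | lra].
    + contradict E; apply Rinv_neq_0_compat.
      repeat (apply Rmult_integral_contrapositive; split); assumption.
  - apply Rminus_diag_uniq; rewrite Omega_sub, E by assumption. field. auto.
Qed.

Lemma collision_level_ge0 (k : R) (a b : Z) :
  (a < 0 < b)%Z -> 0 <= collision_level k a b.
Proof.
  intros hab.
  assert (ha : IZR a <= -1) by (apply IZR_le; lia).
  assert (hb : 1 <= IZR b) by (apply IZR_le; lia).
  assert (hk4 : 0 <= k ^ 4) by (replace (k ^ 4) with ((k ^ 2) ^ 2) by ring; apply pow2_ge_0).
  assert (hab1 : 1 <= - IZR a * IZR b) by nra.
  assert (hquad : 0 <= IZR a ^ 2 + IZR a * IZR b + IZR b ^ 2 - 1) by nra.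
  unfold collision_level.
  replace (k ^ 4 * IZR a * IZR b * (1 - IZR a ^ 2 - IZR a * IZR b - IZR b ^ 2) / 3)
    with (k ^ 4 * ((- IZR a * IZR b) * (IZR a ^ 2 + IZR a * IZR b + IZR b ^ 2 - 1)) / 3)
    by field.
  apply Rmult_le_pos; [apply Rmult_le_pos; [exact hk4 | nra] | lra].
Qed.

Lemma IZR_sqr_ge1 (a : Z) : a <> 0%Z -> 1 <= IZR a ^ 2.
Proof.
  intros ha. destruct (Z.lt_ge_cases a 0) as [h | h].
  - assert (IZR a <= -1) by (apply IZR_le; lia). nra.
  - assert (1 <= IZR a) by (apply IZR_le; lia). nra.
Qed.

Lemma Omega_at_collision_level (k g : R) (a b : Z) :
  k <> 0 -> IZR a <> 0 -> g ^ 2 = collision_level k a b ->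
  Omega k a g = k ^ 3 * (IZR a + IZR b) * (1 - IZR a ^ 2 - IZR b ^ 2).
Proof. intros hk ha E. unfold Omega, collision_level in *. rewrite E. field. auto. Qed.

Lemma Omega_collision_eq0_iff (k g : R) (a b : Z) :
  k <> 0 -> a <> 0%Z -> b <> 0%Z -> a <> b -> Omega k a g = Omega k b g ->
  Omega k a g = 0 <-> (a + b = 0)%Z.
Proof.
  intros hk ha hb hab E.
  rewrite (Omega_at_collision_level k g a b) by (try apply not_0_IZR; try apply Omega_eq_iff; assumption).
  pose proof (IZR_sqr_ge1 a ha); pose proof (IZR_sqr_ge1 b hb).
  assert (hk3 : k ^ 3 <> 0) by (now apply pow_nonzero).
  rewrite <- plus_IZR. split.
  - intros F. apply eq_IZR.
    apply Rmult_integral in F as [F | F]; [| lra].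
    apply Rmult_integral in F as [F | F]; [contradiction | exact F].
  - intros ->. ring.
Qed.

Lemma add_shift_eq0_iff (Delta : nat) (n : Z) :
  (- Z.of_nat Delta < n < 0)%Z ->
  (n + (n + Z.of_nat Delta) = 0)%Z <-> Nat.Even Delta /\ n = (- Z.of_nat (Delta / 2))%Z.
Proof.
  intros hn; split.
  - intros E.
    assert (hD : Delta = (2 * Z.to_nat (- n))%nat) by lia.
    split; [now exists (Z.to_nat (- n)) |].
    rewrite hD, Nat.mul_comm, Nat.div_mul by lia. lia.
  - intros [[p ->] E]. rewrite Nat.mul_comm, Nat.div_mul in E by lia. lia.
Qed.

Theorem lemma3p1 (k : R) (Delta : nat) (hk : 0 < k) :
  forall n : Z, (- Z.of_nat Delta < n < 0)%Z ->
    (exists gc : R, Omega k n gc = Omega k (n + Z.of_nat Delta) gc) /\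
    (forall gc : R, Omega k n gc = Omega k (n + Z.of_nat Delta) gc ->
       (Omega k n gc = 0 <->
          (Nat.Even Delta /\ n = (- Z.of_nat (Delta / 2))%Z))).
Proof.
  intros n hn.
  assert (hk0 : k <> 0) by lra.
  assert (hn0 : n <> 0%Z) by lia.
  assert (hm0 : (n + Z.of_nat Delta)%Z <> 0%Z) by lia.
  assert (hnm : n <> (n + Z.of_nat Delta)%Z) by lia.
  split.
  - exists (sqrt (collision_level k n (n + Z.of_nat Delta))).
    apply Omega_eq_iff, pow2_sqrt, collision_level_ge0; try assumption; lia.
  - intros g E.
    rewrite <- add_shift_eq0_iff by exact hn.
    now apply Omega_collision_eq0_iff.
Qed.
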